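(* The three-qubit CCZ gate $\mathrm{diag}(1,1,1,1,1,1,1,-1)$ can be emulated, without ancillae, by a three-qutrit circuit consisting of qutrit Clifford gates and $R$ gates with $R$-count $3$ (exactly three $R$ gates).
   Context: A qutrit is $\mathbb{C}^3$ with basis $\ket{0},\ket{1},\ket{2}$; $\omega=e^{2\pi i/3}$. Qutrit Clifford gates are those generated (up to global phase) by $S=\mathrm{diag}(1,1,\omega)$, $H=\frac{1}{\sqrt3}\begin{pmatrix}1&1&1\\1&\omega&\bar\omega\\1&\bar\omega&\omega\end{pmatrix}$ and $\mathrm{CX}:\ket{i,j}\mapsto\ket{i,(i+j)\bmod3}$. The qutrit reflection gate is $R=\mathrm{diag}(1,1,-1)$. A qutrit unitary $V$ on $n$ qutrits emulates an $n$-qubit unitary $U$ if, identifying qubit basis states $\ket{x}$, $x\in\{0,1\}^n$, with the equally labelled qutrit basis states, $V\ket{x}=U\ket{x}$ for all $x\in\{0,1\}^n$. *)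

From mathcomp Require Import all_boot all_order all_algebra all_field.
Set Implicit Arguments. Unset Strict Implicit. Unset Printing Implicit Defensive.
Import GRing.Theory Num.Theory.
Local Open Scope ring_scope.

(* omega = e^{2 pi i/3} = (-1 + i sqrt 3)/2 *)
Definition omega : algC := (-1 + 'i * sqrtC 3) / 2.

Definition S1 : 'M[algC]_3 :=
  \matrix_(a < 3, b < 3) (if a == b then (if val a == 2%N then omega else 1) else 0).
Definition H1 : 'M[algC]_3 :=
  \matrix_(a < 3, b < 3) ((sqrtC 3)^-1 * omega ^+ (val a * val b)).
Definition R1 : 'M[algC]_3 :=
  \matrix_(a < 3, b < 3) (if a == b then (if val a == 2%N then -1 else 1) else 0).

(* Three qutrits: basis index i : 'I_27, the state of qutrit k is digit k of i
   in base 3 (dig 0 least significant). *)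
Definition dig (k : nat) (i : nat) : nat := (i %/ 3 ^ k) %% 3.
Definition set_dig (k : nat) (i v : nat) : nat := i - dig k i * 3 ^ k + v * 3 ^ k.

Definition on_wire (k : 'I_3) (G : 'M[algC]_3) : 'M[algC]_27 :=
  \matrix_(i < 27, j < 27)
    (if [forall l : 'I_3, (l != k) ==> (dig l i == dig l j)]
     then G (inord (dig k i)) (inord (dig k j)) else 0).

Definition CX3 (c t : 'I_3) : 'M[algC]_27 :=
  \matrix_(i < 27, j < 27)
    ((val i == set_dig t j ((dig c j + dig t j) %% 3))%:R).

Inductive gate : Type :=
| GS of 'I_3
| GH of 'I_3
| GCX of 'I_3 & 'I_3
| GR of 'I_3
| GPhase of algC.   (* global phase: Clifford gates are taken up to global phase *)

Definition gate_valid (g : gate) : bool :=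
  match g with
  | GCX c t => c != t
  | GPhase z => `|z| == 1
  | _ => true
  end.

Definition is_R (g : gate) : bool := if g is GR _ then true else false.

Definition gate_mx (g : gate) : 'M[algC]_27 :=
  match g with
  | GS k => on_wire k S1
  | GH k => on_wire k H1
  | GCX c t => CX3 c t
  | GR k => on_wire k R1
  | GPhase z => z%:M
  end.

(* circuit [g1; ...; gm] applied in that order: unitary gm * ... * g1 *)
Definition circuit_mx (s : seq gate) : 'M[algC]_27 :=
  foldl (fun M g => gate_mx g *m M) 1%:M s.

(* Three qubits: x : 'I_8, bit k of x is qubit k; embedded as the qutrit basis
   state with the same labels. *)
Definition bit (k : nat) (x : nat) : nat := (x %/ 2 ^ k) %% 2.
Definition embed (x : nat) : nat := bit 0 x + bit 1 x * 3 + bit 2 x * 9.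
Definition E : 'M[algC]_(27, 8) :=
  \matrix_(i < 27, x < 8) ((val i == embed x)%:R).

Definition emulates (V : 'M[algC]_27) (U : 'M[algC]_8) : Prop := V *m E = E *m U.

Definition CCZ : 'M[algC]_8 :=
  \matrix_(x < 8, y < 8) (if x == y then (if val x == 7%N then -1 else 1) else 0).

From mathcomp Require Import all_boot all_order all_algebra all_field.
From mathcomp Require Import zify.
(* CX and R send every computational basis state of three qutrits to a signed
   basis state, so a circuit of such gates is described exactly by its
   classical action on pairs (sign, basis index).  It therefore suffices to
   follow that action on the eight qubit inputs, where the circuit below flips
   the sign exactly on |111>. *)

Set Implicit Arguments. Unset Strict Implicit. Unset Printing Implicit Defensive.
Import GRing.Theory Num.Theory.
Local Open Scope ring_scope.

Lemma dig_lt k i : (dig k i < 3)%N.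
Proof. exact: ltn_pmod. Qed.

Lemma dig0 i : dig 0 i = (i %% 3)%N.
Proof. by rewrite /dig expn0 divn1. Qed.

Lemma digS k i : dig k.+1 i = dig k (i %/ 3).
Proof. by rewrite /dig expnS divnMA. Qed.

Lemma eq_from_dig n i j : (i < 3 ^ n)%N -> (j < 3 ^ n)%N ->
  (forall l, (l < n)%N -> dig l i = dig l j) -> i = j.
Proof.
elim: n i j => [|n IH] i j; first by rewrite expn0 !ltnS !leqn0 => /eqP-> /eqP->.
move=> hi hj eq_dig.
rewrite (divn_eq i 3) (divn_eq j 3) -!dig0 eq_dig //; congr (_ * _ + _)%N.
apply: IH => [||l hl]; rewrite ?ltn_divLR // -?expnSr // -!digS.
exact: eq_dig.
Qed.

Lemma set_dig_lt n k i v : (k < n)%N -> (i < 3 ^ n)%N -> (v < 3)%N ->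
  (set_dig k i v < 3 ^ n)%N.
Proof.
move=> hk hi hv; rewrite /set_dig.
set p := (3 ^ k)%N; set q := (i %/ 3 ^ k.+1)%N; set r := (i %% p)%N.
have hr : (r < p)%N by rewrite ltn_pmod ?expn_gt0.
have def_i : i = (q * 3 * p + dig k i * p + r)%N.
  rewrite {1}(divn_eq i p) (divn_eq (i %/ p) 3) /q expnSr -divnMA -/p.
  by rewrite mulnDl -mulnA.
have hq : (q < 3 ^ (n - k.+1))%N.
  by rewrite ltn_divLR ?expn_gt0 // -expnD subnK.
have -> : (3 ^ n = 3 ^ (n - k.+1) * 3 * p)%N by rewrite -mulnA -expnS -expnD subnK.
have := dig_lt k i; nia.
Qed.

Definition ket (j : nat) : 'cV[algC]_27 := \col_(i < 27) (val i == j)%:R.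

Lemma ket_delta (j : 'I_27) : ket j = delta_mx j 0.
Proof. by apply/matrixP=> i z; rewrite !mxE (ord1 z) eqxx andbT. Qed.

Lemma mulmx_ket (A : 'M[algC]_27) j (hj : (j < 27)%N) : A *m ket j = col (Ordinal hj) A.
Proof. by rewrite colE -ket_delta. Qed.

Lemma on_wire_diag_ket k (G : 'M[algC]_3) j : is_diag_mx G -> (j < 27)%N ->
  on_wire k G *m ket j = G (inord (dig k j)) (inord (dig k j)) *: ket j.
Proof.
move=> /is_diag_mxP G_diag hj.
rewrite mulmx_ket; apply/matrixP=> i z; rewrite /ket !mxE /=.
have [eq_ij|ne_ij] := eqVneq (i : nat) j.
  rewrite mulr1 (_ : i = Ordinal hj); last exact: val_inj.
  by case: forallP => // -[] l; exact/implyP.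
rewrite mulr0; case: forallP => // eq_other.
apply: G_diag; rewrite !inordK ?dig_lt //; apply: contra_neq ne_ij => eq_k.
apply/(@eq_from_dig 3) => //= l hl.
have [eq_lk|ne_lk] := eqVneq l k; first by rewrite eq_lk.
exact/eqP/(implyP (eq_other (Ordinal hl)) ne_lk).
Qed.

Lemma R_ket k j : (j < 27)%N ->
  on_wire k R1 *m ket j = (-1) ^+ (dig k j == 2%N) *: ket j.
Proof.
move=> hj; rewrite on_wire_diag_ket //; last first.
  by apply/is_diag_mxP=> a b /negPf ne_ab; rewrite mxE -val_eqE ne_ab.
by rewrite mxE eqxx /= inordK ?dig_lt //; case: (_ == _).
Qed.

Lemma CX_ket c t j : (j < 27)%N ->
  CX3 c t *m ket j = ket (set_dig t j ((dig c j + dig t j) %% 3)).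
Proof.
by move=> hj; rewrite mulmx_ket; apply/matrixP=> i z; rewrite !mxE.
Qed.

Definition signed_ket (st : bool * nat) : 'cV[algC]_27 := (-1) ^+ st.1 *: ket st.2.

Definition is_CX_or_R (g : gate) : bool :=
  match g with GCX _ _ | GR _ => true | _ => false end.

Definition classical_step (st : bool * nat) (g : gate) : bool * nat :=
  match g with
  | GCX c t => (st.1, set_dig t st.2 ((dig c st.2 + dig t st.2) %% 3))
  | GR k => (st.1 (+) (dig k st.2 == 2%N), st.2)
  | _ => st
  end.

Lemma classical_step_lt st g : (st.2 < 27)%N -> ((classical_step st g).2 < 27)%N.
Proof.
by case: g => //= c t hst; apply: (@set_dig_lt 3); rewrite ?ltn_ord ?ltn_pmod.
Qed.

Lemma gate_mx_signed_ket g st : is_CX_or_R g -> (st.2 < 27)%N ->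
  gate_mx g *m signed_ket st = signed_ket (classical_step st g).
Proof.
case: g => //= [c t|k] _ hst; rewrite /signed_ket -scalemxAr ?CX_ket ?R_ket //.
by rewrite scalerA signr_addb.
Qed.

Lemma foldl_gate_mx (M : 'M[algC]_27) s :
  foldl (fun M g => gate_mx g *m M) M s = circuit_mx s *m M.
Proof.
elim: s M => [|g s IH] M /=; first by rewrite /circuit_mx mul1mx.
by rewrite /circuit_mx /= !IH mulmx1 mulmxA.
Qed.

Lemma circuit_mx_cons g s : circuit_mx (g :: s) = circuit_mx s *m gate_mx g.
Proof. by rewrite {1}/circuit_mx /= foldl_gate_mx mulmx1. Qed.

Lemma circuit_mx_signed_ket s st : all is_CX_or_R s -> (st.2 < 27)%N ->
  circuit_mx s *m signed_ket st = signed_ket (foldl classical_step st s).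
Proof.
elim: s st => [|g s IH] st /=; first by rewrite /circuit_mx mul1mx.
move=> /andP[g_CX_R s_CX_R] hst.
by rewrite circuit_mx_cons -mulmxA gate_mx_signed_ket // IH ?classical_step_lt.
Qed.

Lemma bit_lt k x : (bit k x < 2)%N.
Proof. exact: ltn_pmod. Qed.

Lemma embed_lt x : (embed x < 27)%N.
Proof. by rewrite /embed; have := bit_lt 0 x; have := bit_lt 1 x; have := bit_lt 2 x; lia. Qed.

Lemma emulates_diag_mx V (d : 'rV[algC]_8) :
  (forall x : 'I_8, V *m ket (embed x) = d 0 x *: ket (embed x)) ->
  emulates V (diag_mx d).
Proof.
move=> V_ket; apply/matrixP=> i x; rewrite mul_mx_diag !mxE mulrC.
have /matrixP/(_ i 0) := V_ket x; rewrite /ket !mxE => <-.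
by apply: eq_bigr => j _; rewrite !mxE.
Qed.

Lemma CCZ_diag : CCZ = diag_mx (\row_(x < 8) (-1) ^+ (val x == 7%N)).
Proof. by apply/matrixP=> x y; rewrite !mxE; case: eqVneq => // ->; case: (_ == _). Qed.

Definition w0 : 'I_3 := @Ordinal 3 0 isT.
Definition w1 : 'I_3 := @Ordinal 3 1 isT.
Definition w2 : 'I_3 := @Ordinal 3 2 isT.

(* On a qubit input x = (x0, x1, x2), CX c t adds x_c to x_t mod 3 and R on t
   flips the sign iff x_t = 2.  The three lines load x1 - x2 on wire 1, then
   x0 - x1 + x2 and x0 - x1 - x2 on wire 0, apply R and restore the wire; the
   flips occur on {001, 101}, {101, 010} and {010, 001, 111} (digits x0 x1 x2),
   whose symmetric difference is {111}. *)
Definition ccz_circuit : seq gate :=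
  nseq 2 (GCX w2 w1) ++ [:: GR w1; GCX w2 w1] ++
  nseq 2 (GCX w1 w0) ++ [:: GCX w2 w0; GR w0; GCX w1 w0] ++ nseq 2 (GCX w2 w0) ++
  nseq 2 (GCX w1 w0) ++ nseq 2 (GCX w2 w0) ++ [:: GR w0; GCX w1 w0; GCX w2 w0].

Lemma ccz_circuit_classical (x : 'I_8) :
  foldl classical_step (false, embed x) ccz_circuit = (val x == 7%N, embed x).
Proof.
have: all (fun x => foldl classical_step (false, embed x) ccz_circuit == (x == 7%N, embed x))
  (iota 0 8) by vm_compute.
by move=> /allP/(_ x); rewrite mem_iota ltn_ord => /(_ isT)/eqP.
Qed.

Theorem mainTheorem6 :
  exists s : seq gate,
    all gate_valid s /\ count is_R s = 3%N /\ emulates (circuit_mx s) CCZ.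
Proof.
exists ccz_circuit; split=> //; split=> //.
rewrite CCZ_diag; apply: emulates_diag_mx => x.
have := @circuit_mx_signed_ket ccz_circuit (false, embed x) isT (embed_lt x).
by rewrite ccz_circuit_classical /signed_ket expr0 scale1r mxE.
Qed.
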